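(* Let $\phi$ be an IPC formula disjunctive in the variable $x$ and let $n$ be the cardinality of $\mathrm{Head}(\phi)$. Then for every Heyting algebra $H$ and valuation $v$ of the variables other than $x$, the map $F(h)=[\![\phi]\!]_{(v,h/x)}$ satisfies $\mu.F=F^{n+1}(\bot)$.
   Context: A formula is disjunctive in $x$ if it is generated by the grammar $\phi ::= x \mid \alpha\to\phi \mid \beta\vee\phi \mid \phi\vee\phi$, where $\alpha,\beta$ range over IPC formulas not containing $x$ (disjunctions up to commutativity). $\mathrm{Head}(\phi)$ is the set of formulas $\alpha$ used in productions $\alpha\to\phi'$ in the parse of $\phi$. $\mu.F$ is the least fixed point of $F$. *)

From HB Require Import structures.
From mathcomp Require Import all_boot all_order.
Set Implicit Arguments. Unset Strict Implicit. Unset Printing Implicit Defensive.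
Import Order.TTheory.
Local Open Scope order_scope.

Inductive form : Type :=
| Var of nat
| Bot
| Top
| And of form & form
| Or of form & form
| Imp of form & form.

Definition form_eq_dec (f g : form) : {f = g} + {f <> g}.
Proof. decide equality; exact: (fun m n : nat => eq_comparable m n). Defined.

HB.instance Definition _ := comparableMixin form_eq_dec.

Fixpoint occurs (x : nat) (f : form) : bool :=
  match f with
  | Var y => y == x
  | Bot | Top => false
  | And a b | Or a b | Imp a b => occurs x a || occurs x b
  end.

(* phi ::= x | alpha -> phi | beta \/ phi | phi \/ phi  (alpha, beta x-free;
   disjunction up to commutativity) *)
Inductive disjunctive (x : nat) : form -> Prop :=
| DVar : disjunctive x (Var x)
| DImp a p : ~~ occurs x a -> disjunctive x p -> disjunctive x (Imp a p)
| DOrL b p : ~~ occurs x b -> disjunctive x p -> disjunctive x (Or b p)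
| DOrR b p : ~~ occurs x b -> disjunctive x p -> disjunctive x (Or p b)
| DOr p q : disjunctive x p -> disjunctive x q -> disjunctive x (Or p q).

(* The heads alpha of productions alpha -> phi' in the (unique) parse of a
   formula disjunctive in x; x-free disjuncts beta are not descended into. *)
Fixpoint head (x : nat) (f : form) : seq form :=
  match f with
  | Imp a p => a :: head x p
  | Or a b => (if occurs x a then head x a else [::]) ++
              (if occurs x b then head x b else [::])
  | _ => [::]
  end.

Definition card_head (x : nat) (f : form) : nat := size (undup (head x f)).

Definition heyting_imp {d : Order.disp_t} (H : tbLatticeType d)
  (imp : H -> H -> H) : Prop :=
  forall a b c : H, (c `&` a <= b) = (c <= imp a b).

Fixpoint eval {d : Order.disp_t} (H : tbLatticeType d) (imp : H -> H -> H)
  (v : nat -> H) (f : form) : H :=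
  match f with
  | Var y => v y
  | Bot => \bot
  | Top => \top
  | And a b => eval imp v a `&` eval imp v b
  | Or a b => eval imp v a `|` eval imp v b
  | Imp a b => imp (eval imp v a) (eval imp v b)
  end.

Definition upd {T : Type} (v : nat -> T) (x : nat) (h : T) : nat -> T :=
  fun y => if y == x then h else v y.

Definition is_lfp {d : Order.disp_t} (H : porderType d) (F : H -> H) (a : H) : Prop :=
  F a = a /\ forall y, F y = y -> a <= y.

From Pilot Require Import Defs.
From HB Require Import structures.
From mathcomp Require Import all_boot all_order.
Import Order.TTheory.
Local Open Scope order_scope.
Set Implicit Arguments. Unset Strict Implicit.

(* F is monotone and inflationary, so the iterates F^m(bot) increase and it
   suffices to show F^(n+2)(bot) <= F^(n+1)(bot).  Unfolding F once along the
   parse of phi, an element c <= F(F^(m+1)(bot)) lies below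
   F(F^m(bot)) \/ F^(m+1)(bot), except that under an implication alpha -> phi'
   it is c /\ alpha that must be pushed down one level.  If alpha is among the
   heads already assumed of c this costs nothing; otherwise c /\ alpha assumes
   one more head.  Hence c <= F^(m+1)(bot) implies c <= F^m(bot) as soon as
   fewer than m heads are not yet assumed, by induction on m. *)

Lemma is_lfp_iter_bot (d : Order.disp_t) (H : bPOrderType d) (F : H -> H) k :
  {homo F : y z / y <= z} -> F (iter k F \bot) = iter k F \bot ->
  is_lfp F (iter k F \bot).
Proof.
move=> homoF fixF; split=> // y Fy; elim: k {fixF} => [|k IH] /=; first exact: le0x.
by rewrite -Fy homoF.
Qed.

Section Fresh.
Variable T : eqType.
Implicit Types S A : seq T.

Definition nfresh S A : nat := count [predC A] (undup S).

Lemma nfresh_nil S : nfresh S [::] = size (undup S).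
Proof. by rewrite /nfresh -count_predT; apply: eq_count. Qed.

Lemma nfresh_subset S A B : {subset A <= B} -> (nfresh S B <= nfresh S A)%N.
Proof. by move=> AB; apply: sub_count => s /=; apply: contra (AB s). Qed.

Lemma nfresh_cons S A a :
  a \in S -> a \notin A -> nfresh S A = (nfresh S (a :: A)).+1.
Proof.
move=> aS aA; have one_a : count (pred1 a) (undup S) = 1%N.
  by rewrite (count_uniq_mem _ (undup_uniq S)) mem_undup aS.
have := count_predUI [predC a :: A] (pred1 a) (undup S).
rewrite one_a addn1 (@eq_count _ (predI _ _) pred0) ?count_pred0 ?addn0 => [<-|s /=].
  apply: eq_count => s /=; rewrite inE negb_or.
  by case: (s =P a) => [->|] /=; rewrite ?aA ?orbF.
by rewrite inE negb_or; case: (s =P a) => [->|]; rewrite ?eqxx ?andbF.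
Qed.

End Fresh.

Section Heyting.
Variables (d : Order.disp_t) (H : tbLatticeType d) (imp : H -> H -> H).
Hypothesis himp : heyting_imp imp.

Lemma imp_meetl a y : imp a y `&` a <= y.
Proof. by rewrite himp. Qed.

Lemma le_imp a y : y <= imp a y.
Proof. by rewrite -himp leIl. Qed.

Lemma le_imp2l a y z : y <= z -> imp a y <= imp a z.
Proof. by move=> yz; rewrite -himp (le_trans (imp_meetl a y)). Qed.

(* Distributivity, obtained from residuation: joins are preserved by c `&` _. *)
Lemma le_join_cases (c y z g : H) :
  c <= y `|` z -> c `&` y <= g -> c `&` z <= g -> c <= g.
Proof.
move=> cyz cy cz.
have : y `|` z <= imp c g by rewrite leUx -!himp ![_ `&` c]meetC cy cz.
by move=> /(le_trans cyz); rewrite -himp meetxx.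
Qed.

Variables (v : nat -> H) (x : nat).

Local Notation ev h f := (eval imp (upd v x h) f).

Definition forces (c : H) (A : seq form) := forall b, b \in A -> c <= eval imp v b.

Lemma forces_meetl c a A : forces c A -> forces (c `&` a) A.
Proof. by move=> cA b /cA; apply: le_trans; rewrite leIl. Qed.

Lemma eval_upd_free a h : ~~ occurs x a -> ev h a = eval imp v a.
Proof.
elim: a => //= [y|a IHa b IHb|a IHa b IHb|a IHa b IHb];
  try by rewrite negb_or => /andP[/IHa -> /IHb ->].
by rewrite /upd => /negbTE ->.
Qed.

Lemma disjunctive_occurs p : disjunctive x p -> occurs x p.
Proof. by elim=> /= [|a q _ _ ->|b q _ _ ->|b q _ _ ->|q r _ ->]; rewrite ?eqxx ?orbT. Qed.

Lemma le_eval_upd p y : disjunctive x p -> y <= ev y p.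
Proof.
elim=> /= [|a q _ _ IH|b q _ _ IH|b q _ _ IH|q r _ IH _ _].
- by rewrite /upd eqxx.
- exact: le_trans IH (le_imp _ _).
- exact: le_trans IH (leUr _ _).
- exact: le_trans IH (leUl _ _).
- exact: le_trans IH (leUl _ _).
Qed.

Lemma eval_upd_homo p : disjunctive x p -> {homo (fun h => ev h p) : y z / y <= z}.
Proof.
move=> dp y z yz; elim: dp => /= [|a q na _ IH|b q nb _ IH|b q nb _ IH|q r _ IHq _ IHr].
- by rewrite /upd eqxx.
- by rewrite !(eval_upd_free _ na) le_imp2l.
- by rewrite !(eval_upd_free _ nb) leU2.
- by rewrite !(eval_upd_free _ nb) leU2.
- exact: leU2.
Qed.

Lemma le_joinU (c u w u' w' y : H) :
  c <= u `|` w -> c `&` u <= u' `|` y -> c `&` w <= w' `|` y ->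
  c <= (u' `|` w') `|` y.
Proof.
move=> cuw cu cw; apply: le_join_cases cuw _ _.
- by apply: le_trans cu _; rewrite leU2 ?leUl.
- by apply: le_trans cw _; rewrite leU2 ?leUr.
Qed.

Lemma le_eval_upd_join (S : seq form) (y1 y2 : H) p :
  disjunctive x p -> {subset Defs.head x p <= S} ->
  forall A c,
  (forall A' a c', {subset A <= A'} -> a \in S -> a \notin A' ->
     forces c' (a :: A') -> c' <= y1 -> c' <= y2) ->
  forces c A -> c <= ev y1 p -> c <= ev y2 p `|` y1.
Proof.
elim=> /= [|a q na dq IH|b q nb dq IH|b q nb dq IH|q r dq IHq dr IHr] hS A c step cA.
- by rewrite /upd eqxx => cy1; rewrite (le_trans cy1) ?leUr.
- rewrite !(eval_upd_free _ na) -himp => hc.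
  set c' := c `&` eval imp v a.
  have c'aA : forces c' (a :: A).
    move=> b; rewrite inE => /predU1P[->|bA]; first by rewrite /c' leIr.
    exact: forces_meetl cA b bA.
  have AaA : {subset A <= a :: A} by move=> z zA; rewrite inE zA orbT.
  have step' A' a' c'' (sA : {subset a :: A <= A'}) :=
    step A' a' c'' (fun z zA => sA z (AaA z zA)).
  have hSq : {subset Defs.head x q <= S} by move=> z zq; rewrite hS // inE zq orbT.
  have := IH hSq _ _ step' c'aA hc.
  case: (boolP (a \in A)) => aA c'q.
    have cc' : c <= c' by rewrite lexI lexx cA.
    by apply: le_trans cc' (le_trans c'q _); rewrite leU2 ?le_imp.
  suff : c' <= ev y2 q by rewrite himp => /le_trans; apply; rewrite leUl.
  apply: le_join_cases c'q (leIr _ _) _; apply: le_trans (le_eval_upd _ dq).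
  apply: (step A a) => //; first by rewrite hS ?mem_head.
    exact: forces_meetl.
  exact: leIr.
- rewrite (negbTE nb) (disjunctive_occurs dq) /= in hS.
  rewrite !(eval_upd_free _ nb) => hc; apply: le_joinU hc _ _.
    by rewrite leIxr ?leUl.
  exact: IH hS A _ step (forces_meetl _ cA) (leIr _ _).
- rewrite (negbTE nb) (disjunctive_occurs dq) /= cats0 in hS.
  rewrite !(eval_upd_free _ nb) => hc; apply: le_joinU hc _ _.
    exact: IH hS A _ step (forces_meetl _ cA) (leIr _ _).
  by rewrite leIxr ?leUl.
- rewrite (disjunctive_occurs dq) (disjunctive_occurs dr) /= in hS.
  move=> hc; apply: le_joinU hc _ _.
    by apply: IHq (forces_meetl _ cA) (leIr _ _) => // z zq; rewrite hS ?mem_cat ?zq.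
  by apply: IHr (forces_meetl _ cA) (leIr _ _) => // z zr; rewrite hS ?mem_cat ?zr ?orbT.
Qed.

Lemma iter_eval_upd_le phi (dphi : disjunctive x phi) m A c :
  (nfresh (Defs.head x phi) A < m)%N -> forces c A ->
  c <= iter m.+1 (fun h => ev h phi) \bot -> c <= iter m (fun h => ev h phi) \bot.
Proof.
elim: m A c => // m IH A c hA cA hc.
rewrite -[X in _ <= X]joinxx; apply: (le_eval_upd_join dphi (fun _ => id) _ cA hc).
move=> A' a c' sA aS aA c'aA; apply: IH c'aA.
by rewrite -ltnS -nfresh_cons // ltnS (leq_trans (nfresh_subset _ sA)).
Qed.

End Heyting.

Theorem mainTheorem20 (x : nat) (phi : form) (hphi : disjunctive x phi)
  (d : Order.disp_t) (H : tbLatticeType d) (imp : H -> H -> H)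
  (himp : heyting_imp imp) (v : nat -> H) :
  is_lfp (fun h : H => eval imp (upd v x h) phi)
         (iter (card_head x phi).+1 (fun h : H => eval imp (upd v x h) phi) \bot).
Proof.
apply: is_lfp_iter_bot; first exact: eval_upd_homo.
apply: le_anti; rewrite le_eval_upd // andbT.
by apply: (iter_eval_upd_le himp hphi (A := [::])); rewrite ?nfresh_nil.
Qed.
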